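(* Let $U$ satisfy the standing assumption below with constant $c$. Let $N\ge2$, and let $p$ be a program of length $N$ which has not stopped on $U$ by time $2^{2N+2c+1}$. Then $U(p)$ does not stop exactly at any algorithmically random time $t\ge2^{2N+2c+1}$. That is, if $t_p<\infty$, then $t_p$ is not algorithmically random.
   Context: Strings are binary and $|x|$ is the length of $x$. $\mathrm{bin}:\{1,2,\dots\}\to\Sigma^*$ sends $n$ to its binary expansion with the leading $1$ removed. $U$ is a fixed universal Turing machine, and $\nabla(x)=\min\{n\ge1:U(\mathrm{bin}(n))=x\}$ is the natural complexity of $x$. $t_p$ is the exact step at which $U(p)$ halts, with $t_p=\infty$ if it never halts. A nonempty string $x$ is algorithmically random if $\nabla(x)\ge2^{|x|}/|x|$. A time $t\ge2$ is algorithmically random if $\mathrm{bin}(t)$ is algorithmically random. Standing assumption: there is a computable transformation $p\mapsto time(p)$ and a positive integer constant $c$ such that, for every program $p$: (i) $U(p)$ halts if and only if $U(time(p))$ halts; (ii) $|time(p)|\le|p|+c$; (iii) if $U(p)$ halts, then $U(time(p))=\mathrm{bin}(t_p)$. *)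

From mathcomp Require Import all_boot all_order all_algebra.
Set Implicit Arguments. Unset Strict Implicit. Unset Printing Implicit Defensive.
Import Order.TTheory GRing.Theory Num.Theory.

(* Little-endian binary digits of n (fuel n suffices). *)
Fixpoint bits_aux (fuel n : nat) : seq bool :=
  match fuel with
  | 0 => [::]
  | f.+1 => if n is 0 then [::] else odd n :: bits_aux f n./2
  end.
Definition bits (n : nat) : seq bool := bits_aux n n.

(* bin n : binary expansion of n (most significant bit first) with the
   leading 1 removed. *)
Definition bin (n : nat) : seq bool := behead (rev (bits n)).

(* A machine is modelled by its bounded-run function:
   M p k = Some x  iff  M(p) has halted with output x within k steps,
   M p k = None    iff  M(p) has not halted within k steps. *)
Definition machine := seq bool -> nat -> option (seq bool).

Definition monotone_machine (M : machine) : Prop :=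
  forall p k, M p k <> None -> M p k.+1 = M p k.

Definition halts (M : machine) (p : seq bool) : Prop := exists k, M p k <> None.

Definition outputs (M : machine) (p x : seq bool) : Prop :=
  exists k, M p k = Some x.

Definition halts_at (M : machine) (p : seq bool) (t : nat) : Prop :=
  M p t <> None /\ forall k, k < t -> M p k = None.

(* x is algorithmically random: x nonempty and nabla(x) >= 2^|x|/|x|,
   where nabla(x) = min {n >= 1 : M(bin n) = x}  (= +infinity if no such n). *)
Definition alg_random (M : machine) (x : seq bool) : Prop :=
  (0 < size x)%N /\
  forall n : nat, (0 < n)%N -> outputs M (bin n) x ->
    ((2 ^ size x)%:R / (size x)%:R <= (n%:R : rat))%R.

Definition alg_random_time (M : machine) (t : nat) : Prop :=
  (2 <= t)%N /\ alg_random M (bin t).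

Definition standing_assumption (M : machine) (tm : seq bool -> seq bool)
    (c : nat) : Prop :=
  (0 < c)%N /\
  (forall p, halts M p <-> halts M (tm p)) /\
  (forall p, (size (tm p) <= size p + c)%N) /\
  (forall p t, halts_at M p t -> outputs M (tm p) (bin t)).

From mathcomp Require Import all_boot all_order all_algebra.
From mathcomp Require Import zify.
Import Order.TTheory GRing.Theory Num.Theory.

(* The program [tm p] has length at most N + c and prints [bin t_p], so
   nabla(bin t_p) < 2^(N+c+1).  When t_p >= 2^(2N+2c+1), the string bin t_p
   has length m >= 2N+2c+1, and then 2^(N+c+1) <= 2^m/m: t_p is not random. *)

Lemma bits_aux_fuel f g n :
  (n <= f)%N -> (n <= g)%N -> bits_aux f n = bits_aux g n.
Proof.
elim: f g n => [|f IH] [|g] [|n] //= Hf Hg.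
by congr (_ :: _); apply: IH; lia.
Qed.

Lemma bitsE n : bits n = if n is 0 then [::] else odd n :: bits n./2.
Proof.
case: n => [|n] //; rewrite /bits /=; congr (_ :: _).
by apply: bits_aux_fuel => //; lia.
Qed.

Lemma bits_gt n : (n < 2 ^ size (bits n))%N.
Proof.
elim/ltn_ind: n => -[|n] IH //; rewrite bitsE /= expnS.
have half_lt : (n.+1./2 < n.+1)%N by rewrite ltn_half_double -addnn; lia.
have := IH _ half_lt; have := odd_double_half n.+1.
by rewrite /= -!addnn; case: (odd n) => /=; lia.
Qed.

Lemma ltn_exp2_size_bin t : (t < 2 ^ (size (bin t)).+1)%N.
Proof.
rewrite /bin size_behead size_rev.
by case: t (bits_gt t) => [|t]; [rewrite expn_gt0 | case: (bits t)].
Qed.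

(* [unbin q] is the index n of q in the enumeration of programs: bin n = q. *)
Definition unbin (q : seq bool) : nat :=
  foldl (fun n (b : bool) => n.*2 + b) 1 q.

Lemma unbin_rcons q b : unbin (rcons q b) = (unbin q).*2 + b.
Proof. by rewrite /unbin -cats1 foldl_cat. Qed.

Lemma unbin_gt0 q : (0 < unbin q)%N.
Proof. by elim/last_ind: q => [|q b IH] //; rewrite unbin_rcons; lia. Qed.

Lemma unbin_lt q : (unbin q < 2 ^ (size q).+1)%N.
Proof.
elim/last_ind: q => [|q b IH] //; rewrite unbin_rcons size_rcons expnS.
by case: b; lia.
Qed.

Lemma bits_unbin q : bits (unbin q) = rev q ++ [:: true].
Proof.
elim/last_ind: q => [|q b IH] //.
have q_gt0 := unbin_gt0 q.
rewrite unbin_rcons bitsE rev_rcons.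
case E: ((unbin q).*2 + b) => [|n]; first lia.
rewrite -E /= -IH; clear E; congr (_ :: _).
  by rewrite oddD odd_double; case: b.
by rewrite addnC half_bit_double.
Qed.

Lemma bin_unbin q : bin (unbin q) = q.
Proof. by rewrite /bin bits_unbin rev_cat revK. Qed.

Lemma alg_random_le {M : machine} {q x} :
  alg_random M x -> outputs M q x -> (2 ^ size x <= unbin q * size x)%N.
Proof.
case=> x_gt0 rand out_qx.
have := rand _ (unbin_gt0 q); rewrite bin_unbin => /(_ out_qx).
by rewrite ler_pdivrMr ?ltr0n // -natrM ler_nat.
Qed.

Lemma halts_at_ge {M : machine} {p t T} :
  (forall k, (k < T)%N -> M p k = None) -> halts_at M p t -> (T <= t)%N.
Proof.
move=> silent [halted _]; rewrite leqNgt; apply/negP => lt_tT.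
exact: halted (silent _ lt_tT).
Qed.

Lemma double_lt_exp2 j : (3 <= j)%N -> (j.*2.+1 < 2 ^ j)%N.
Proof.
elim: j => [|j IH] // j_ge3; rewrite expnS.
case: (ltngtP j 2) => [lt_j2 | lt2j | -> //]; first lia.
by have := IH lt2j; lia.
Qed.

(* With j := m - a >= a - 1 >= 3 we get m <= 2j + 1 < 2^j. *)
Lemma exp2_mul_lt a m : (4 <= a)%N -> (a.*2 <= m.+1)%N -> (2 ^ a * m < 2 ^ m)%N.
Proof.
move=> a_ge4 le_am; have := double_lt_exp2 (m - a) ltac:(lia).
have -> : 2 ^ m = 2 ^ a * 2 ^ (m - a) by rewrite -expnD; congr (_ ^ _); lia.
rewrite ltn_pmul2l ?expn_gt0 //; lia.
Qed.

Theorem mainTheorem6 (U : machine) (hU : monotone_machine U)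
    (tm : seq bool -> seq bool) (c : nat)
    (hstand : standing_assumption U tm c)
    (N : nat) (hN : (2 <= N)%N) (p : seq bool) (hp : size p = N)
    (hnot : forall k, (k < 2 ^ (2 * N + 2 * c + 1))%N -> U p k = None) :
  forall t : nat, halts_at U p t -> ~ alg_random_time U t.
Proof.
move=> t halt_t [_ rand_t].
case: hstand => [c_gt0 [_ [size_tm out_tm]]].
set m := size (bin t).
have large_m : (2 * N + 2 * c + 1 <= m)%N.
  rewrite -ltnS -(ltn_exp2l _ _ (isT : 1 < 2)%N).
  exact: leq_ltn_trans (halts_at_ge hnot halt_t) (ltn_exp2_size_bin _).
have exp2_lt : (2 ^ (N + c).+1 * m < 2 ^ m)%N.
  by apply: exp2_mul_lt; lia.
have nabla_lt : (unbin (tm p) < 2 ^ (N + c).+1)%N.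
  apply: leq_trans (unbin_lt _) _; rewrite leq_exp2l // ltnS.
  by have := size_tm p; rewrite hp.
have nabla_ge : (2 ^ m <= unbin (tm p) * m)%N :=
  alg_random_le rand_t (out_tm _ _ halt_t).
have nabla_m_lt : (unbin (tm p) * m < 2 ^ m)%N.
  by apply: leq_ltn_trans exp2_lt; rewrite leq_mul2r (ltnW nabla_lt) orbT.
by have := leq_ltn_trans nabla_ge nabla_m_lt; rewrite ltnn.
Qed.
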